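(* Let $n$ and $r$ be positive integers with $\frac{14}{5}r-1\le n\le 3r-2$. Then $\rho_2(K(n,r))=3$.
   Context: For integers $n\ge 2r$, the Kneser graph $K(n,r)$ has as vertices the $r$-element subsets of $[n]=\{1,\dots,n\}$, two vertices being adjacent iff they are disjoint. A $2$-packing of a graph $G$ is a set of vertices pairwise at distance at least $3$ in $G$; $\rho_2(G)$ is the maximum cardinality of a $2$-packing. *)

From mathcomp Require Import all_boot all_order.
Set Implicit Arguments. Unset Strict Implicit. Unset Printing Implicit Defensive.

Definition kneser_vertex (n r : nat) : predArgType :=
  {A : {set 'I_n} | #|A| == r}.

Definition kneser_adj (n r : nat) : rel (kneser_vertex n r) :=
  fun A B => [disjoint val A & val B].

Definition dist_le (T : finType) (e : rel T) (k : nat) (x y : T) : Prop :=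
  exists p : seq T, [/\ path e x p, last x p = y & size p <= k].

Definition two_packing (T : finType) (e : rel T) (S : {set T}) : Prop :=
  forall x y, x \in S -> y \in S -> x != y -> ~ dist_le e 2 x y.

Definition rho2_eq (T : finType) (e : rel T) (m : nat) : Prop :=
  (exists S : {set T}, two_packing e S /\ #|S| = m) /\
  (forall S : {set T}, two_packing e S -> #|S| <= m).

From mathcomp Require Import all_boot all_order.
From mathcomp Require Import zify.
Set Implicit Arguments. Unset Strict Implicit. Unset Printing Implicit Defensive.

(* Two distinct r-sets A, B are at distance at least 3 in K(n,r) iff they meet
   and have no common neighbour, i.e. iff 0 < |A :&: B| and |A :&: B| + n < 3r.
   Four such sets would give, by the Bonferroni inequality,
   4r <= n + 6(3r - n - 1), contradicting 14r <= 5(n + 1).  Conversely, three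
   r-sets forming a sunflower with a core of size c = 3r - n - 1 and disjoint
   petals of size n - 2r + 1 fit in [n] exactly because n <= 3r - 2. *)

Lemma exists_subset_card (T : finType) (A : {set T}) k :
  k <= #|A| -> exists2 B : {set T}, B \subset A & #|B| = k.
Proof.
elim: k => [|k IH] le_kA; first by exists set0; rewrite ?sub0set ?cards0.
have [B sBA cardB] := IH (ltnW le_kA).
have : 0 < #|A :\: B| by rewrite cardsD (setIidPr sBA); lia.
case/card_gt0P => x; rewrite in_setD => /andP [xNB xA].
exists (x |: B); first by rewrite subUset sub1set xA sBA.
by rewrite cardsU1 xNB cardB.
Qed.

Lemma leq_card_setI_bigcup (I T : finType) (P : pred I) (A : {set T})
    (F : I -> {set T}) :
  #|A :&: \bigcup_(i | P i) F i| <= \sum_(i | P i) #|A :&: F i|.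
Proof.
elim/big_rec2: _ => [|i m U _ leUm]; first by rewrite setI0 cards0.
by rewrite setIUr (leq_trans (leq_card_setU _ _).1) ?leq_add2l.
Qed.

Lemma card_bigcup_pairwise_meet (I T : finType) (S : {set I})
    (F : I -> {set T}) a b :
  {in S, forall i, a <= #|F i|} ->
  {in S &, forall i j, i != j -> #|F i :&: F j| <= b} ->
  #|S| * a <= #|\bigcup_(i in S) F i| + 'C(#|S|, 2) * b.
Proof.
move: {2}#|S| (erefl #|S|) => k; elim: k S => [|k IH] S cardS geF meetF.
  by rewrite cardS.
have [i Si] : exists i, i \in S by apply/card_gt0P; rewrite cardS.
have cardSi : #|S :\ i| = k by move: (cardsD1 i S); rewrite Si cardS; lia.
have sSiS : {subset S :\ i <= S} by move=> j /setD1P [].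
have IHi := IH (S :\ i) cardSi (sub_in1 sSiS geF) (sub_in2 sSiS meetF).
have meet_rest : #|F i :&: \bigcup_(j in S :\ i) F j| <= k * b.
  rewrite -cardSi -sum_nat_const (leq_trans (leq_card_setI_bigcup _ _ _)) //.
  apply: leq_sum => j /setD1P [ji Sj]; apply: meetF => //; by rewrite eq_sym.
have := cardsUI (F i) (\bigcup_(j in S :\ i) F j).
rewrite (big_setD1 i Si) cardS binS bin1 /=.
have := geF i Si; rewrite cardSi in IHi; lia.
Qed.

Definition ord_range n a b : {set 'I_n} := [set x : 'I_n | a <= x < b].

Lemma card_ord_range n a b : b <= n -> #|ord_range n a b| = b - a.
Proof.
move=> le_bn; rewrite -sum1_card (eq_bigl (fun i : 'I_n => a <= i < b)) => [|i].
  2: by rewrite inE.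
rewrite -(big_mkord (fun i => a <= i < b) (fun _ => 1)).
rewrite -(big_nat_widen 0 b n (fun i => a <= i)) //.
rewrite -(big_nat_widenl a 0 b predT) //.
by rewrite sum_nat_const_nat muln1.
Qed.

Lemma ord_range_disjoint n a b a' b' :
  b <= a' -> [disjoint ord_range n a b & ord_range n a' b'].
Proof.
move=> le_ba'; rewrite -setI_eq0; apply/eqP/setP => x; rewrite !inE.
apply/negbTE; apply/negP => /andP [/andP [_ lt_xb] /andP [le_a'x _]]; lia.
Qed.

Lemma dist_le2P (T : finType) (e : rel T) x y : x != y ->
  dist_le e 2 x y <-> e x y \/ exists z, e x z && e z y.
Proof.
move=> neq_xy; split.
- case=> [[|z [|w [|? ?]]]] [/= walk_xy last_xy //].
  + by rewrite last_xy eqxx in neq_xy.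
  + by rewrite last_xy andbT in walk_xy; left.
  + by rewrite last_xy andbT in walk_xy; right; exists z.
- case=> [e_xy | [z /andP [e_xz e_zy]]].
  + by exists [:: y]; rewrite /= e_xy.
  + by exists [:: z; y]; rewrite /= e_xz e_zy.
Qed.

Section KneserDistance.
Variables n r : nat.
Implicit Types x y z : kneser_vertex n r.

Lemma kneser_vertex_card x : #|val x| = r.
Proof. exact/eqP/(valP x). Qed.

Lemma kneser_common_neighbourP x y :
  (exists z, kneser_adj x z && kneser_adj z y) <-> #|val x :|: val y| + r <= n.
Proof.
have card_compl := cardsC (val x :|: val y); rewrite card_ord in card_compl.
have adj2E z :
    kneser_adj x z && kneser_adj z y = (val z \subset ~: (val x :|: val y)).
  by rewrite setCU subsetI -!disjoints_subset disjoint_sym.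
split=> [[z] | le_n].
- rewrite adj2E => /subset_leq_card; rewrite kneser_vertex_card; lia.
- have [B sB cardB] :
      exists2 B : {set 'I_n}, B \subset ~: (val x :|: val y) & #|B| = r.
    by apply: exists_subset_card; lia.
  by exists (exist _ B (introT eqP cardB)); rewrite adj2E.
Qed.

Lemma kneser_far x y : x != y ->
  ~ dist_le (@kneser_adj n r) 2 x y <->
  0 < #|val x :&: val y| /\ #|val x :&: val y| + n < 3 * r.
Proof.
move=> neq_xy; rewrite dist_le2P // kneser_common_neighbourP.
have := cardsUI (val x) (val y); rewrite !kneser_vertex_card.
rewrite /kneser_adj -setI_eq0 -cards_eq0.
move: #|_ :&: _| #|_ :|: _| => i u card_sum.
split; lia.
Qed.

End KneserDistance.

Lemma two_packingS (T : finType) (e : rel T) (S S' : {set T}) :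
  S' \subset S -> two_packing e S -> two_packing e S'.
Proof. by move=> /subsetP sS'S packS x y /sS'S Sx /sS'S Sy; apply: packS. Qed.

Lemma kneser_two_packing_card_le3 n r (S : {set kneser_vertex n r}) :
  14 * r <= 5 * (n + 1) -> two_packing (@kneser_adj n r) S -> #|S| <= 3.
Proof.
move=> le_r_n packS; rewrite leqNgt; apply/negP => gt3_S.
have [S4 sS4S card_S4] := exists_subset_card gt3_S.
have meet : {in S4 &, forall x y : kneser_vertex n r,
               x != y -> #|val x :&: val y| + n < 3 * r}.
  move=> x y S4x S4y neq_xy.
  by have [] := (kneser_far neq_xy).1 (two_packingS sS4S packS S4x S4y neq_xy).
(* Without it the truncated bound 3 * r - n - 1 below would be 0. *)
have lt_n_3r : n < 3 * r.
  have [x [y [S4x S4y neq_xy]]] : exists x y, [/\ x \in S4, y \in S4 & x != y].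
    by apply/card_gt1P; rewrite card_S4.
  by have := meet x y S4x S4y neq_xy; lia.
have ge_r : {in S4, forall x : kneser_vertex n r, r <= #|val x|}.
  by move=> x _; rewrite kneser_vertex_card.
have le_meet : {in S4 &, forall x y : kneser_vertex n r,
                  x != y -> #|val x :&: val y| <= 3 * r - n - 1}.
  move=> x y S4x S4y /(meet x y S4x S4y); lia.
have := card_bigcup_pairwise_meet ge_r le_meet.
move/leq_trans/(_ (leq_add (max_card _) (leqnn _))).
rewrite card_S4 card_ord; have -> : 'C(4, 2) = 6 by []; lia.
Qed.

Section Sunflower.
Variables n c d : nat.

Definition sunflower i : {set 'I_n} :=
  ord_range n 0 c :|: ord_range n (c + i * d) (c + i.+1 * d).

Lemma card_sunflower k i : c + k * d <= n -> i < k -> #|sunflower i| = c + d.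
Proof.
move=> fits lt_ik; have le_petal : c + i.+1 * d <= n.
  by apply: leq_trans fits; rewrite leq_add2l leq_mul.
rewrite cardsU (disjoint_setI0 (ord_range_disjoint _ _ _ _)) ?leq_addr //.
rewrite cards0 !card_ord_range //; last lia.
rewrite mulSn; lia.
Qed.

Lemma sunflowerI i j : i != j -> sunflower i :&: sunflower j = ord_range n 0 c.
Proof.
move=> neq_ij; rewrite -setUIr.
have petalsI : ord_range n (c + i * d) (c + i.+1 * d) :&:
               ord_range n (c + j * d) (c + j.+1 * d) = set0.
  move: neq_ij; rewrite neq_ltn => /orP [lt | lt]; last rewrite setIC;
    by apply/disjoint_setI0/ord_range_disjoint; rewrite leq_add2l leq_mul.
by rewrite petalsI setU0.
Qed.

End Sunflower.

Lemma kneser_sunflower_packing n r c k :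
  0 < c < r -> c + n < 3 * r -> c + k * (r - c) <= n ->
  exists S : {set kneser_vertex n r},
    two_packing (@kneser_adj n r) S /\ #|S| = k.
Proof.
move=> /andP [c_gt0 lt_cr] c_small fits.
have card_v (i : 'I_k) : #|sunflower n c (r - c) i| == r.
  by rewrite (card_sunflower fits) ?ltn_ord // subnKC // ltnW.
pose v (i : 'I_k) : kneser_vertex n r :=
  exist _ (sunflower n c (r - c) i) (card_v i).
have vI i j : i != j -> val (v i) :&: val (v j) = ord_range n 0 c.
  exact: sunflowerI.
have card_core : #|ord_range n 0 c| = c by rewrite card_ord_range ?subn0; lia.
have v_inj : injective v.
  move=> i j eq_v; case: (eqVneq i j) => // /vI; rewrite eq_v setIid => core_v.
  by have := kneser_vertex_card (v j); rewrite core_v card_core; lia.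
exists [set v i | i : 'I_k]; split; last by rewrite card_imset // card_ord.
move=> _ _ /imsetP [i _ ->] /imsetP [j _ ->] neq_v.
have neq_ij : i != j by apply: contraNneq neq_v => ->.
by apply/kneser_far => //; rewrite vI // card_core; lia.
Qed.

Theorem corollary4p9 (n r : nat) :
  0 < r -> 0 < n -> 14 * r <= 5 * (n + 1) -> n <= 3 * r - 2 ->
  rho2_eq (@kneser_adj n r) 3.
Proof.
move=> r_gt0 n_gt0 le_r_n le_n_r; split.
- apply: (@kneser_sunflower_packing n r (3 * r - n - 1)); lia.
- by move=> S; apply: kneser_two_packing_card_le3.
Qed.
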